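(* For any algebra $(A,\to,1)$ of type $(2,0)$, it satisfies (Re), (Ex) and (An) if and only if it satisfies (Re), (M), (Ex) and (An).
   Context: Properties, required for all $x,y,z\in A$: (Re) $x\to x=1$; (M) $1\to x=x$; (Ex) $x\to(y\to z)=y\to(x\to z)$; (An) $x\to y=1$ and $y\to x=1$ imply $x=y$. *)

Definition prop_Re {A : Type} (imp : A -> A -> A) (one : A) : Prop :=
  forall x : A, imp x x = one.

Definition prop_M {A : Type} (imp : A -> A -> A) (one : A) : Prop :=
  forall x : A, imp one x = x.

Definition prop_Ex {A : Type} (imp : A -> A -> A) : Prop :=
  forall x y z : A, imp x (imp y z) = imp y (imp x z).

Definition prop_An {A : Type} (imp : A -> A -> A) (one : A) : Prop :=
  forall x y : A, imp x y = one -> imp y x = one -> x = y.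


(* Exchange and reflexivity give [1 -> ((1 -> x) -> x) = 1] and
   [x -> (1 -> x) = 1]; a second use of exchange shows that [1 -> w = 1]
   forces [w -> 1 = 1], so antisymmetry yields [(1 -> x) -> x = 1] and then
   [1 -> x = x]. *)

Section ReExAn.

Variables (A : Type) (imp : A -> A -> A) (one : A).
Hypotheses (Re : prop_Re imp one) (Ex : prop_Ex imp) (An : prop_An imp one).

Lemma imp_one_eq_one (w : A) : imp one w = one -> w = one.
Proof.
  intro Hw. apply An; [| exact Hw].
  transitivity (imp w (imp one w)); [now rewrite Hw |].
  rewrite Ex, Re. apply Re.
Qed.

Lemma imp_imp_one_l (x : A) : imp (imp one x) x = one.
Proof. apply imp_one_eq_one. rewrite Ex. apply Re. Qed.

Lemma imp_imp_one_r (x : A) : imp x (imp one x) = one.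
Proof. rewrite Ex, Re. apply Re. Qed.

Lemma ReExAn_M : prop_M imp one.
Proof. intro x. apply An; [apply imp_imp_one_l | apply imp_imp_one_r]. Qed.

End ReExAn.

Theorem corollary4p2 (A : Type) (imp : A -> A -> A) (one : A) :
  (prop_Re imp one /\ prop_Ex imp /\ prop_An imp one) <->
  (prop_Re imp one /\ prop_M imp one /\ prop_Ex imp /\ prop_An imp one).
Proof.
  split.
  - intros [Re [Ex An]]. repeat split; auto using ReExAn_M.
  - intros [Re [_ [Ex An]]]. auto.
Qed.
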